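(* The word complexity function $\mathcal{C}$ of $\mathrm{Sub}_\tau$ satisfies $\mathcal{C}(1)=4$, $\mathcal{C}(2)=6$, $\mathcal{C}(3)=8$. Moreover, for every integer $n\geq 2$ and every $L=2^n+k$ with $0\le k<2^n$, $$\mathcal{C}(L)=\begin{cases} 2^{n+1}+2^{n-1}+3k, & 0\le k<2^{n-1},\\ 2^{n+1}+2^{n}+2k, & 2^{n-1}\le k<2^{n}.\end{cases}$$
   Context: Let $\mathcal{A}=\{a,x,y,z\}$ and let $\tau$ be the substitution (monoid morphism on finite words over $\mathcal{A}$) defined by $\tau(a)=axa$, $\tau(x)=y$, $\tau(y)=z$, $\tau(z)=x$. For a finite word $w$, $\mathrm{Sub}(w)$ denotes the set of finite (contiguous) subwords of $w$. Let $\mathrm{Sub}_\tau=\bigcup_{s\in\mathcal{A},\,n\in\mathbb{N}\cup\{0\}}\mathrm{Sub}(\tau^n(s))$. The word complexity is $\mathcal{C}(L)=$ the number of elements of $\mathrm{Sub}_\tau$ of length $L$. *)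

From HB Require Import structures.
From mathcomp Require Import all_boot.
From Stdlib Require Import Classical ClassicalEpsilon.
Set Implicit Arguments. Unset Strict Implicit. Unset Printing Implicit Defensive.

Inductive letter := La | Lx | Ly | Lz.

Definition letter_to_ord (c : letter) : 'I_4 :=
  match c with La => inord 0 | Lx => inord 1 | Ly => inord 2 | Lz => inord 3 end.
Definition ord_to_letter (i : 'I_4) : letter :=
  match val i with 0 => La | 1 => Lx | 2 => Ly | _ => Lz end.
Lemma letter_to_ordK : cancel letter_to_ord ord_to_letter.
Proof. by case; rewrite /ord_to_letter /= inordK. Qed.

HB.instance Definition _ := Finite.copy letter (can_type letter_to_ordK).

Definition tau_letter (c : letter) : seq letter :=
  match c with
  | La => [:: La; Lx; La]
  | Lx => [:: Ly]
  | Ly => [:: Lz]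
  | Lz => [:: Lx]
  end.

Definition tau (w : seq letter) : seq letter := flatten (map tau_letter w).

Definition in_Sub_tau (w : seq letter) : Prop :=
  exists (s : letter) (n : nat), infix w (iter n tau [:: s]).

Definition asbool (P : Prop) : bool :=
  if excluded_middle_informative P then true else false.

Definition complexity (L : nat) : nat :=
  #|[pred w : L.-tuple letter | asbool (in_Sub_tau (tval w))]|.

From mathcomp Require Import all_boot zify.
From Stdlib Require Import ClassicalEpsilon.

Set Implicit Arguments. Unset Strict Implicit. Unset Printing Implicit Defensive.

(* Sub_tau consists of the factors of the fixed point u = tau^oo(a) = axayaxaz...,
   whose letters satisfy u_(2i) = a and u_(2i+1) = h(u_i) for h = next_letter:
   tau^n(a) is the prefix of length 2^(n+1) - 1 of u, and tau^n of any other letter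
   is a single letter. A factor of length L starting at an even (resp. odd) position
   thus interleaves a's with the h-image of a factor of length floor(L/2)
   (resp. ceil(L/2)), and is determined by it. Now h only identifies a with z, and on
   factors of length at least 3 it is injective: factors starting at positions of the
   same parity have their a's at the same places, while an odd position p with
   u_p = u_(p+2) = z does not exist. Hence C(L) = C(floor(L/2)) + C(ceil(L/2)) for
   L >= 6, and the formula follows by induction on n from C(1), ..., C(8). *)

Definition next_letter (c : letter) : letter :=
  match c with La => Lx | Lx => Ly | Ly => Lz | Lz => Lx end.

Lemma next_letter_neqA c : next_letter c != La.
Proof. by case: c; apply/eqP. Qed.

Lemma tau_letter_nonA c : c != La -> tau_letter c = [:: next_letter c].
Proof. by case: c; rewrite ?eqxx. Qed.

(* u_i = h^(nu_2(i+1))(a) is the closed form of u_(2i) = a, u_(2i+1) = h(u_i). *)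
Definition tau_fix (i : nat) : letter := iter (logn 2 i.+1) next_letter La.

Lemma tau_fix_even i : tau_fix (2 * i) = La.
Proof. by rewrite /tau_fix logn_coprime // coprime2n /= oddM. Qed.

Lemma tau_fix_odd i : tau_fix (2 * i + 1) = next_letter (tau_fix i).
Proof.
rewrite /tau_fix -iterS; congr iter.
by rewrite (_ : (2 * i + 1).+1 = 2 * i.+1) ?lognM //; lia.
Qed.

Lemma tau_fix_shift q j :
  tau_fix (2 * q + j) = if odd j then next_letter (tau_fix (q + j./2)) else La.
Proof.
case: ifP => Hj.
  by rewrite (_ : 2 * q + j = 2 * (q + j./2) + 1) ?tau_fix_odd //; lia.
by rewrite (_ : 2 * q + j = 2 * (q + j./2)) ?tau_fix_even //; lia.
Qed.

Lemma tau_fix_eqA i : (tau_fix i == La) = ~~ odd i.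
Proof.
have := tau_fix_shift 0 i; rewrite muln0 add0n => ->.
by case: ifP; rewrite ?eqxx ?(negbTE (next_letter_neqA _)).
Qed.

Lemma tau_fix_surj c : exists p, tau_fix p = c.
Proof. by case: c; [exists 0 | exists 1 | exists 3 | exists 7]. Qed.

Definition window (p L : nat) : seq letter := map tau_fix (iota p L).

Lemma size_window p L : size (window p L) = L.
Proof. by rewrite size_map size_iota. Qed.

Lemma windowD p m n : window p (m + n) = window p m ++ window (p + m) n.
Proof. by rewrite /window iotaD map_cat. Qed.

Lemma nth_window p L j : j < L -> nth La (window p L) j = tau_fix (p + j).
Proof. by move=> Hj; rewrite (nth_map 0) ?size_iota // nth_iota. Qed.

Lemma tau_cat s t : tau (s ++ t) = tau s ++ tau t.
Proof. by rewrite /tau map_cat flatten_cat. Qed.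

Lemma tau_window_pair q : tau (window (2 * q + 1) 2) = window (4 * q + 3) 4.
Proof.
have -> : window (2 * q + 1) 2 = [:: tau_fix (2 * q + 1); tau_fix (2 * (q + 1))].
  by rewrite /window /=; congr [:: _; tau_fix _]; lia.
have -> : window (4 * q + 3) 4 = [:: tau_fix (2 * (2 * q + 1) + 1); tau_fix (2 * (2 * q + 2));
    tau_fix (2 * (2 * (q + 1)) + 1); tau_fix (2 * (2 * q + 3))].
  by rewrite /window /=; congr [:: tau_fix _; tau_fix _; tau_fix _; tau_fix _]; lia.
by rewrite !tau_fix_odd !tau_fix_even /tau /= tau_letter_nonA ?next_letter_neqA.
Qed.

Lemma tau_window M : tau (window 0 (2 * M + 1)) = window 0 (4 * M + 3).
Proof.
elim: M => [|M IH]; first by rewrite /window /tau /= /tau_fix.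
rewrite (_ : 2 * M.+1 + 1 = (2 * M + 1) + 2) 1?(_ : 4 * M.+1 + 3 = (4 * M + 3) + 4); try lia.
by rewrite windowD [in RHS]windowD tau_cat IH tau_window_pair.
Qed.

Lemma iter_tau_a n : iter n tau [:: La] = window 0 (2 ^ n.+1 - 1).
Proof.
elim: n => [|n IH]; first by rewrite /window /tau_fix.
rewrite iterS IH (_ : 2 ^ n.+1 - 1 = 2 * (2 ^ n - 1) + 1) ?tau_window; last first.
  by rewrite expnS; have := expn_gt0 2 n; lia.
by congr window; rewrite !expnS; have := expn_gt0 2 n; lia.
Qed.

Lemma iter_tau_nonA n c : c != La -> iter n tau [:: c] = [:: iter n next_letter c].
Proof.
move=> Hc; elim: n => [|n IH] //=.
have Hn : iter n next_letter c != La by case: n {IH} => [|n] //=; apply: next_letter_neqA.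
by rewrite IH /tau /= cats0 tau_letter_nonA.
Qed.

Lemma window_infix p L N : p + L <= N -> infix (window p L) (window 0 N).
Proof.
move=> H; apply/infixP; exists (window 0 p), (window (p + L) (N - (p + L))).
by rewrite -!windowD; congr window; lia.
Qed.

Lemma infix_window w p N : infix w (window p N) -> exists q, w = window q (size w).
Proof.
case/infixP=> s [s' E]; exists (p + size s).
have HN : N = size s + (size w + size s') by rewrite -(size_window p N) E !size_cat.
have Ew : take (size w) (drop (size s) (window p N)) = w.
  by rewrite E drop_size_cat // take_size_cat.
rewrite -{1}Ew /window -map_drop -map_take drop_iota take_iota.
by congr (map _ (iota _ _)); lia.
Qed.

Lemma in_Sub_tauE w : 0 < size w -> in_Sub_tau w <-> exists p, w = window p (size w).
Proof.
move=> Hw; split.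
- case=> s [n]; have [->|Hs] := eqVneq s La.
    by rewrite iter_tau_a; apply: infix_window.
  rewrite iter_tau_nonA // infixs1 -size_eq0 eqn0Ngt Hw => /eqP ->.
  by have [p <-] := tau_fix_surj (iter n next_letter s); exists p.
- case=> p E; exists La, (p + size w).
  rewrite iter_tau_a {1}E; apply: window_infix.
  by have := ltn_expl (p + size w) (ltnSn 1); rewrite expnS; lia.
Qed.

Lemma asboolP (P : Prop) : reflect P (asbool P).
Proof. by rewrite /asbool; case: excluded_middle_informative => H; constructor. Qed.

Definition factors L : {set L.-tuple letter} :=
  [set t | asbool (exists p, tval t = window p L)].

Lemma complexity_factors L : 0 < L -> complexity L = #|factors L|.
Proof.
move=> HL; apply: eq_card => t.
have := @in_Sub_tauE t; rewrite size_tuple => /(_ HL) E.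
by rewrite !inE; apply/asboolP/asboolP => /E.
Qed.

Definition window_tuple p L : L.-tuple letter := Tuple (introT eqP (size_window p L)).

Lemma factorsP L t : reflect (exists p, t = window_tuple p L) (t \in factors L).
Proof.
rewrite inE; apply: (iffP (asboolP _)) => [[p Ep] | [p ->]]; last by exists p.
by exists p; apply: val_inj.
Qed.

Definition next_factors m : {set m.-tuple letter} :=
  [set map_tuple next_letter t | t in factors m].

(* The word of length L starting at position 2q + r of u, recovered from the h-image g
   of the window at q: a's at the positions of parity r, the letters of g elsewhere. *)
Definition spread (r : bool) L {m} (g : m.-tuple letter) : L.-tuple letter :=
  [tuple if odd (r + j) then nth La g (r + j)./2 else La | j < L].

Lemma window_spread (r : bool) q L :
  window_tuple (2 * q + r) L =
  spread r L (map_tuple next_letter (window_tuple q (r + L)./2)).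
Proof.
apply: eq_from_tnth => j; rewrite tnth_mktuple (tnth_nth La) /= nth_window //.
rewrite -addnA tau_fix_shift; case: ifP => // Hodd.
by rewrite (nth_map La) ?nth_window ?size_window //; have := ltn_ord j; lia.
Qed.

Lemma spread_inj (r : bool) L : injective (@spread r L (r + L)./2).
Proof.
move=> g1 g2 E; apply: eq_from_tnth => i.
have Hj : 2 * i + 1 - r < L by have := ltn_ord i; lia.
have := congr1 (fun t => tnth t (Ordinal Hj)) E; rewrite !tnth_mktuple /=.
rewrite (_ : r + (2 * i + 1 - r) = 2 * i + 1); last by lia.
have Hodd : odd (2 * i + 1) by rewrite addn1 /= mul2n odd_double.
by rewrite Hodd (_ : (2 * i + 1)./2 = i) ?(tnth_nth La) //; lia.
Qed.

Lemma factors_start (r : bool) L : 0 < L ->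
  [set t in factors L | (nth La t 0 != La) == r] = spread r L @: next_factors (r + L)./2.
Proof.
move=> HL; apply/setP => t; rewrite inE; apply/andP/imsetP.
- case=> /factorsP [p ->]; rewrite /= nth_window // addn0 tau_fix_eqA negbK => /eqP Hp.
  exists (map_tuple next_letter (window_tuple p./2 (r + L)./2)).
    by apply: imset_f; apply/factorsP; exists p./2.
  by rewrite -window_spread (_ : 2 * p./2 + r = p) //; lia.
- case=> _ /imsetP [s /factorsP [q ->] ->] ->; rewrite -window_spread.
  split; first by apply/factorsP; exists (2 * q + r).
  by rewrite /= nth_window // addn0 tau_fix_eqA negbK oddD mul2n odd_double oddb.
Qed.

Lemma card_factors_split L : 0 < L ->
  #|factors L| = #|next_factors L./2| + #|next_factors (uphalf L)|.
Proof.
move=> HL; rewrite -(cardsID [set t : L.-tuple letter | nth La t 0 != La]) addnC.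
have -> : factors L :&: [set t : L.-tuple letter | nth La t 0 != La] =
    [set t in factors L | (nth La t 0 != La) == true].
  by apply/setP => t; rewrite !inE eqb_id.
have -> : factors L :\: [set t : L.-tuple letter | nth La t 0 != La] =
    [set t in factors L | (nth La t 0 != La) == false].
  by apply/setP => t; rewrite !inE eqbF_neg andbC.
by rewrite !factors_start // !(card_imset _ (@spread_inj _ _)) uphalfE.
Qed.

Lemma next_letter_inj_eqA c d :
  next_letter c = next_letter d -> (c == La) = (d == La) -> c = d.
Proof. by case: c; case: d => //= _; rewrite eqxx; [move/esym/eqP | move/eqP]. Qed.

Lemma next_letter_eqx c : next_letter c = Lx -> c != La -> c = Lz.
Proof. by case: c => //; rewrite eqxx. Qed.

Lemma tau_fix_zz p : odd p -> tau_fix p = Lz -> tau_fix (p + 2) = Lz -> False.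
Proof.
move=> Hp; have [s ->] : exists s, p = 2 * s + 1 by exists p./2; lia.
rewrite (_ : 2 * s + 1 + 2 = 2 * s.+1 + 1) ?tau_fix_odd; last by lia.
have [e [-> | ->]] : exists e, s = 2 * e \/ s = 2 * e + 1 by exists s./2; lia.
  by rewrite tau_fix_even.
by rewrite (_ : (2 * e + 1).+1 = 2 * e.+1) ?tau_fix_even //; lia.
Qed.

Lemma tau_fix_next_collision p q : odd p -> ~~ odd q ->
  next_letter (tau_fix p) = next_letter (tau_fix q) -> tau_fix p = Lz.
Proof.
move=> Hp Hq E; apply: next_letter_eqx; last by rewrite tau_fix_eqA Hp.
by rewrite E (eqP (_ : tau_fix q == La)) // tau_fix_eqA.
Qed.

Lemma next_tau_fix_odd_even p q : odd p -> ~~ odd q ->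
  next_letter (tau_fix p) = next_letter (tau_fix q) ->
  next_letter (tau_fix (p + 2)) <> next_letter (tau_fix (q + 2)).
Proof.
move=> Hp Hq E0 E2; apply: (tau_fix_zz Hp); first exact: tau_fix_next_collision E0.
by apply: tau_fix_next_collision E2; rewrite oddD addbF.
Qed.

Lemma next_factors_inj m : 2 < m -> {in factors m &, injective (map_tuple next_letter)}.
Proof.
move=> Hm _ _ /factorsP [p ->] /factorsP [q ->] /(congr1 val) /= E.
have Enext j : j < m -> next_letter (tau_fix (p + j)) = next_letter (tau_fix (q + j)).
  move=> Hj; have := congr1 (nth La ^~ j) E.
  by rewrite /= !(nth_map La) ?size_window // !nth_window.
suff Hpq : odd p = odd q.
  apply: val_inj; apply: (@eq_from_nth _ La) => [|j]; rewrite !size_window // => Hj.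
  rewrite !nth_window //; apply: next_letter_inj_eqA (Enext j Hj) _.
  by rewrite !tau_fix_eqA !oddD Hpq.
have E0 := Enext 0 (ltnW (ltnW Hm)); have E2 := Enext 2 Hm; rewrite !addn0 in E0.
case: (boolP (odd p)) => Hp; case: (boolP (odd q)) => Hq //; exfalso.
  exact: next_tau_fix_odd_even Hp Hq E0 E2.
exact: next_tau_fix_odd_even Hq Hp (esym E0) (esym E2).
Qed.

Lemma card_next_factors m : 2 < m -> #|next_factors m| = #|factors m|.
Proof. by move=> Hm; apply: card_in_imset; apply: next_factors_inj. Qed.

Lemma next_factorsP m (t : m.-tuple letter) :
  reflect (exists q, tval t = map next_letter (window q m)) (t \in next_factors m).
Proof.
apply: (iffP imsetP) => [[_ /factorsP [q ->] ->] | [q Eq]]; first by exists q.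
by exists (window_tuple q m); [apply/factorsP; exists q | apply: val_inj].
Qed.

(* Equality of letters goes through 'I_4 and does not compute; concrete comparisons are
   decided on these codes instead. *)
Definition letter_code (c : letter) : nat :=
  match c with La => 0 | Lx => 1 | Ly => 2 | Lz => 3 end.

Lemma eq_letterE c d : (c == d) = (letter_code c == letter_code d).
Proof. by case: c; case: d => /=; rewrite ?eqxx //; apply/negbTE/eqP. Qed.

Lemma card_next_factors0 : #|next_factors 0| = 1.
Proof.
rewrite (_ : next_factors 0 = [set [tuple]]) ?cards1 //; apply/setP => t.
by rewrite !inE tuple0 eqxx; apply/next_factorsP; exists 0.
Qed.

Lemma card_next_factors1 : #|next_factors 1| = 3.
Proof.
have -> : next_factors 1 = [tuple Lx] |: ([tuple Ly] |: [set [tuple Lz]]).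
  apply/setP => t; rewrite !inE -!val_eqE; apply/next_factorsP/idP => [[q Eq] | ].
    by rewrite /= Eq !eqseq_cons !eq_letterE; case: (tau_fix q).
  by do ?case/orP; move=> /eqP/val_inj ->; [exists 0 | exists 1 | exists 3].
by rewrite !cardsU1 cards1 !inE -!val_eqE /= !eqseq_cons !eq_letterE.
Qed.

Lemma card_next_factors2 : #|next_factors 2| = 5.
Proof.
have -> : next_factors 2 =
    [tuple Lx; Lx] |: ([tuple Lx; Ly] |: ([tuple Lx; Lz] |:
      ([tuple Ly; Lx] |: [set [tuple Lz; Lx]]))).
  apply/setP => t; rewrite !inE -!val_eqE; apply/next_factorsP/idP => [[q Eq] | ].
    move: (tau_fix_eqA q) (tau_fix_eqA q.+1); rewrite /= Eq !eqseq_cons !eq_letterE.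
    by case: (odd q); case: (tau_fix q); case: (tau_fix q.+1).
  by do ?case/orP; move=> /eqP/val_inj ->;
    [exists 6 | exists 0 | exists 2 | exists 1 | exists 3].
by rewrite !cardsU1 cards1 !inE -!val_eqE /= !eqseq_cons !eq_letterE.
Qed.

Lemma card_factors_halves L : 5 < L -> #|factors L| = #|factors L./2| + #|factors (uphalf L)|.
Proof. by move=> HL; rewrite card_factors_split ?card_next_factors //; lia. Qed.

Lemma card_factors_small :
  [/\ #|factors 1| = 4, #|factors 2| = 6, #|factors 3| = 8 & #|factors 4| = 10].
Proof.
by rewrite !card_factors_split // card_next_factors0 card_next_factors1 card_next_factors2.
Qed.

(* The value of C(2N + k) for N = 2^(n-1). *)
Definition complexity_formula N k := if k < N then 5 * N + 3 * k else 6 * N + 2 * k.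

Lemma complexity_formula_double N k :
  complexity_formula (2 * N) k = complexity_formula N k./2 + complexity_formula N (uphalf k).
Proof. by rewrite /complexity_formula; do 3 case: ifP; lia. Qed.

Lemma card_factors_formula n k :
  k <= 2 ^ n.+2 -> #|factors (2 ^ n.+2 + k)| = complexity_formula (2 ^ n.+1) k.
Proof.
elim: n k => [|n IH] k Hk.
  have [F1 F2 F3 F4] := card_factors_small.
  case: k Hk => [|[|[|[|[|k]]]]] //= _;
    by rewrite card_factors_split // ?card_next_factors2 !card_next_factors ?F3 ?F4.
rewrite !expnS in IH Hk *; have := expn_gt0 2 n; set N := 2 ^ n => HN.
rewrite card_factors_halves; last by lia.
rewrite (_ : (2 * (2 * (2 * N)) + k)./2 = 2 * (2 * N) + k./2); last by lia.
rewrite (_ : uphalf (2 * (2 * (2 * N)) + k) = 2 * (2 * N) + uphalf k); last by lia.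
by rewrite !IH ?complexity_formula_double //; lia.
Qed.

Theorem theorem1 :
  [/\ complexity 1 = 4, complexity 2 = 6, complexity 3 = 8 &
   forall n k : nat, 2 <= n -> k < 2 ^ n ->
     complexity (2 ^ n + k) =
       (if k < 2 ^ n.-1 then 2 ^ n.+1 + 2 ^ n.-1 + 3 * k
        else 2 ^ n.+1 + 2 ^ n + 2 * k)].
Proof.
have [F1 F2 F3 _] := card_factors_small.
split; rewrite ?complexity_factors // => -[|[|n]] k // _ Hk.
rewrite complexity_factors; last by rewrite addn_gt0 expn_gt0.
rewrite card_factors_formula; last exact: ltnW.
by rewrite /complexity_formula -pred_Sn !expnS; case: ifP; lia.
Qed.
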